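(* Let $\mathfrak{H}$ be a Euclidean space and let $(\mathcal{X},\mathsf{S},\gamma,(\Lambda_{a})_{a\in\mathcal{A}})$ be a spectral decomposition system for $\mathfrak{H}$ such that the set $\{\Lambda_a\}_{a\in\mathcal{A}}$ is closed in $\mathscr{L}(\mathcal{X},\mathfrak{H})$. Let $\varphi\colon\mathcal{X}\to(-\infty,+\infty]$ be proper and $\mathsf{S}$-invariant, let $\Psi\colon\mathfrak{H}\to\mathbb{R}$ be Fréchet differentiable, and let $X\in\mathfrak{H}$ be such that $\gamma(X)\in\operatorname{dom}\varphi$. Suppose that $X$ is a local minimizer of $\varphi\circ\gamma+\Psi$. Then there exist $y\in\partial_{\mathsf{F}}\varphi(\gamma(X))$ and $a\in\mathcal{A}_X$ such that $-\nabla\Psi(X)=\Lambda_a y$.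
   Context: A Euclidean space is a finite-dimensional real Hilbert space; $\mathscr{L}(\mathcal{X},\mathfrak{H})$ carries the operator-norm topology. A spectral decomposition system for a Euclidean space $\mathfrak{H}$ is a tuple $(\mathcal{X},\mathsf{S},\gamma,(\Lambda_a)_{a\in\mathcal{A}})$ where $\mathcal{X}$ is a Euclidean space, $\mathsf{S}$ is a group acting on $\mathcal{X}$ such that each map $x\mapsto \mathsf{s}\cdot x$ is a linear isometry, $\gamma\colon\mathfrak{H}\to\mathcal{X}$ is a mapping, and each $\Lambda_a\colon\mathcal{X}\to\mathfrak{H}$ is a linear isometry, such that: [A] there exists a mapping $\tau\colon\mathcal{X}\to\mathcal{X}$ with $\tau(\mathsf{s}\cdot x)=\tau(x)$ for all $\mathsf{s},x$, $\tau(x)\in\mathsf{S}\cdot x$ for all $x$, and $\gamma\circ\Lambda_a=\tau$ for all $a\in\mathcal{A}$; [B] for every $X\in\mathfrak{H}$ there exists $a\in\mathcal{A}$ with $X=\Lambda_a\gamma(X)$; [C] $\langle X,Y\rangle\le\langle\gamma(X),\gamma(Y)\rangle$ for all $X,Y\in\mathfrak{H}$. $\mathcal{A}_X=\{a\in\mathcal{A}:X=\Lambda_a\gamma(X)\}$. A function $\varphi$ on $\mathcal{X}$ is $\mathsf{S}$-invariant if $\varphi(\mathsf{s}\cdot x)=\varphi(x)$ for all $\mathsf{s},x$; $\operatorname{dom}\varphi=\{x:\varphi(x)<+\infty\}$. The Fréchet subdifferential of $f$ at $x$ with $f(x)\in\mathbb{R}$ is $\partial_{\mathsf{F}}f(x)=\{y:\liminf_{z\to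 x,z\ne x}(f(z)-f(x)-\langle z-x,y\rangle)/\|z-x\|\ge0\}$. *)

From HB Require Import structures.
From mathcomp Require Import all_boot all_order all_algebra.
From mathcomp Require Import all_classical all_reals all_analysis.
Set Implicit Arguments. Unset Strict Implicit. Unset Printing Implicit Defensive.
Import Order.TTheory GRing.Theory Num.Theory.
Local Open Scope ring_scope.

(* A Euclidean space of dimension n is modelled as 'rV[R]_n with the
   standard inner product; linear maps X -> H as matrices acting on rows. *)

Definition dot (R : realType) (n : nat) (u v : 'rV[R]_n) : R := (u *m v^T) 0 0.

Definition enorm (R : realType) (n : nat) (u : 'rV[R]_n) : R :=
  Num.sqrt (dot u u).

Definition is_isometric_group_action (R : realType) (m : nat) (G : Type)
  (mul : G -> G -> G) (one : G) (inv : G -> G)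
  (act : G -> 'rV[R]_m -> 'rV[R]_m) : Prop :=
  [/\ (forall s t u, mul s (mul t u) = mul (mul s t) u) /\
      (forall s, mul one s = s /\ mul s one = s) /\
      (forall s, mul (inv s) s = one /\ mul s (inv s) = one),
      (forall x, act one x = x),
      (forall s t x, act (mul s t) x = act s (act t x)) &
      (forall s, (forall x y, act s (x + y) = act s x + act s y) /\
                 (forall (c : R) x, act s (c *: x) = c *: act s x) /\
                 (forall x, enorm (act s x) = enorm x))].

Definition lin_isometry (R : realType) (m n : nat) (M : 'M[R]_(m, n)) : Prop :=
  forall x : 'rV[R]_m, enorm (x *m M) = enorm x.

Definition spectral_decomposition_system (R : realType) (m n : nat)
  (G : Type) (mul : G -> G -> G) (one : G) (inv : G -> G)
  (act : G -> 'rV[R]_m -> 'rV[R]_m) (gamma : 'rV[R]_n -> 'rV[R]_m)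
  (A : Type) (Lam : A -> 'M[R]_(m, n)) : Prop :=
  [/\ is_isometric_group_action mul one inv act,
      (forall a, lin_isometry (Lam a)),
      (exists tau : 'rV[R]_m -> 'rV[R]_m,
          [/\ (forall s x, tau (act s x) = tau x),
              (forall x, exists s, tau x = act s x) &
              (forall a x, gamma (x *m Lam a) = tau x)]),
      (* [B] *)
      (forall X, exists a, X = gamma X *m Lam a) &
      (* [C] *)
      (forall X Y, dot X Y <= dot (gamma X) (gamma Y))].

Definition adapted_set (R : realType) (m n : nat) (gamma : 'rV[R]_n -> 'rV[R]_m)
  (A : Type) (Lam : A -> 'M[R]_(m, n)) (X : 'rV[R]_n) : set A :=
  [set a | X = gamma X *m Lam a].

Definition S_invariant (R : realType) (m : nat) (G : Type)
  (act : G -> 'rV[R]_m -> 'rV[R]_m) (phi : 'rV[R]_m -> \bar R) : Prop :=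
  forall s x, phi (act s x) = phi x.

Definition proper_fun (R : realType) (m : nat) (phi : 'rV[R]_m -> \bar R) : Prop :=
  (forall x, phi x != -oo%E) /\ (exists x, phi x != +oo%E).

Definition domf (R : realType) (m : nat) (phi : 'rV[R]_m -> \bar R) : set 'rV[R]_m :=
  [set x | (phi x < +oo)%E].

(* Fréchet subdifferential: f x real and
   liminf_{z -> x, z <> x} (f z - f x - <z - x, y>) / ||z - x|| >= 0,
   written out with epsilon-delta. *)
Definition frechet_subdiff (R : realType) (m : nat) (f : 'rV[R]_m -> \bar R)
  (x : 'rV[R]_m) : set 'rV[R]_m :=
  [set y | f x \is a fin_num /\
     forall eps : R, 0 < eps -> exists2 delta : R, 0 < delta &
       forall z, 0 < enorm (z - x) < delta ->
         (- (eps * enorm (z - x))%:E <= f z - f x - (dot (z - x) y)%:E)%E].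

Definition is_frechet_gradient (R : realType) (n : nat) (Psi : 'rV[R]_n -> R)
  (X g : 'rV[R]_n) : Prop :=
  forall eps : R, 0 < eps -> exists2 delta : R, 0 < delta &
    forall Y, 0 < enorm (Y - X) < delta ->
      `|Psi Y - Psi X - dot (Y - X) g| <= eps * enorm (Y - X).

Definition local_minimizer (R : realType) (n : nat) (F : 'rV[R]_n -> \bar R)
  (X : 'rV[R]_n) : Prop :=
  exists2 eps : R, 0 < eps & forall Y, enorm (Y - X) < eps -> (F X <= F Y)%E.

From HB Require Import structures.
From mathcomp Require Import all_boot all_order all_algebra.
From mathcomp Require Import all_classical all_reals all_analysis.
From mathcomp Require Import lra.
Import Order.TTheory GRing.Theory Num.Theory.
Import numFieldNormedType.Exports.
Local Open Scope ring_scope.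
Set Implicit Arguments. Unset Strict Implicit. Unset Printing Implicit Defensive.

(* Local minimality of phi o gamma + Psi at X makes v := - grad Psi(X) a
   Frechet subgradient of phi o gamma at X, and for every a in A_X the map
   z |-> z Lambda_a transports it to the subgradient Lambda_a^* v of phi at
   gamma(X), because phi o gamma o Lambda_a = phi by S-invariance.  It remains
   to find a in A_X with v in the range of Lambda_a.  Applying [B] to
   Z = X + t v for small t gives an index a such that, by [C] and the
   subgradient inequality at gamma(X) Lambda_a (where phi o gamma takes the
   same value as at X), |gamma(X) Lambda_a - X| = O(t eps) and v is within
   O(eps) of the range of Lambda_a.  The set of all Lambda_a is a closed set
   of isometries, hence compact, so this misfit attains the value 0. *)

Section EuclideanDot.
Variables (R : realType) (k : nat).
Implicit Types u v w : 'rV[R]_k.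

Lemma dotE u v : dot u v = \sum_j u 0 j * v 0 j.
Proof. by rewrite /dot mxE; apply: eq_bigr => j _; rewrite mxE. Qed.

Lemma dotC u v : dot u v = dot v u.
Proof. by rewrite !dotE; apply: eq_bigr => j _; rewrite mulrC. Qed.

Lemma dotDl u v w : dot (u + v) w = dot u w + dot v w.
Proof. by rewrite !dotE -big_split; apply: eq_bigr => j _; rewrite mxE mulrDl. Qed.

Lemma dotDr u v w : dot w (u + v) = dot w u + dot w v.
Proof. by rewrite dotC dotDl !(dotC w). Qed.

Lemma dotZl (c : R) u v : dot (c *: u) v = c * dot u v.
Proof. by rewrite !dotE mulr_sumr; apply: eq_bigr => j _; rewrite mxE mulrA. Qed.

Lemma dotZr (c : R) u v : dot u (c *: v) = c * dot u v.
Proof. by rewrite dotC dotZl dotC. Qed.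

Lemma dotNl u v : dot (- u) v = - dot u v.
Proof. by rewrite -scaleN1r dotZl mulN1r. Qed.

Lemma dotNr u v : dot u (- v) = - dot u v.
Proof. by rewrite dotC dotNl dotC. Qed.

Lemma dotBl u v w : dot (u - v) w = dot u w - dot v w.
Proof. by rewrite dotDl dotNl. Qed.

Lemma dotBr u v w : dot w (u - v) = dot w u - dot w v.
Proof. by rewrite dotDr dotNr. Qed.

Lemma dot0l v : dot 0 v = 0.
Proof. by rewrite dotE big1 // => j _; rewrite mxE mul0r. Qed.

Lemma dotvv_ge0 u : 0 <= dot u u.
Proof. by rewrite dotE; apply: sumr_ge0 => j _; rewrite -expr2 sqr_ge0. Qed.

Lemma dotvv_eq0 u : dot u u = 0 -> u = 0.
Proof.
rewrite dotE => /eqP; rewrite psumr_eq0 => [/allP u0|j _]; last first.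
  by rewrite -expr2 sqr_ge0.
apply/rowP => j; rewrite mxE.
by have /= := u0 j (mem_index_enum j); rewrite mulf_eq0 orbb => /eqP.
Qed.

Lemma sqr_coord_le_dot u j : u 0 j ^+ 2 <= dot u u.
Proof.
rewrite dotE (bigD1 j) //= -expr2 lerDl.
by apply: sumr_ge0 => i _; rewrite -expr2 sqr_ge0.
Qed.

Lemma dotvvDl_le u v : dot (u + v) (u + v) <= 2 * dot u u + 2 * dot v v.
Proof.
have := dotvv_ge0 (u - v); rewrite !dotBl !dotBr !dotDl !dotDr (dotC v u).
lra.
Qed.

Lemma dotvvN u : dot (- u) (- u) = dot u u.
Proof. by rewrite dotNl dotNr opprK. Qed.

Lemma dotvvZ (c : R) u : dot (c *: u) (c *: u) = c ^+ 2 * dot u u.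
Proof. by rewrite dotZl dotZr mulrA expr2. Qed.

Lemma enorm_ge0 u : 0 <= enorm u.
Proof. exact: sqrtr_ge0. Qed.

Lemma sqr_enorm u : enorm u ^+ 2 = dot u u.
Proof. by rewrite /enorm sqr_sqrtr // dotvv_ge0. Qed.

Lemma enorm_eq0 u : enorm u = 0 -> u = 0.
Proof. by move=> u0; apply: dotvv_eq0; rewrite -sqr_enorm u0 expr0n. Qed.

Lemma enorm_le u (c : R) : 0 <= c -> dot u u <= c ^+ 2 -> enorm u <= c.
Proof. by move=> c0 uc; rewrite -(ger0_norm c0) -sqrtr_sqr ler_wsqrtr. Qed.

End EuclideanDot.

Lemma dot_mulmxl (R : realType) p q (u : 'rV[R]_p) (w : 'rV[R]_q) (L : 'M[R]_(p, q)) :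
  dot (u *m L) w = dot u (w *m L^T).
Proof. by rewrite /dot trmx_mul trmxK mulmxA. Qed.

(* For an isometry L, w |-> w L^T L is the orthogonal projection onto the range
   of x |-> x L. *)
Definition range_residual (R : realType) p q (L : 'M[R]_(p, q)) (w : 'rV[R]_q) :=
  w *m L^T *m L - w.

Lemma range_residualZ (R : realType) p q (L : 'M[R]_(p, q)) (c : R) w :
  range_residual L (c *: w) = c *: range_residual L w.
Proof. by rewrite /range_residual scalerBr !scalemxAl. Qed.

Section LinearIsometry.
Variables (R : realType) (p q : nat) (L : 'M[R]_(p, q)).
Hypothesis isoL : lin_isometry L.
Implicit Types u v : 'rV[R]_p.

Lemma dotvv_iso u : dot (u *m L) (u *m L) = dot u u.
Proof. by rewrite -!sqr_enorm isoL. Qed.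

Lemma dot_iso u v : dot (u *m L) (v *m L) = dot u v.
Proof.
have := dotvv_iso (u + v); rewrite mulmxDl !dotDl !dotDr !dotvv_iso.
by rewrite (dotC (v *m L)) (dotC v); lra.
Qed.

Lemma mulmx_isoK u : u *m L *m L^T = u.
Proof.
apply/eqP; rewrite -subr_eq0; apply/eqP/dotvv_eq0.
by rewrite {1}dotBl dot_mulmxl trmxK dot_iso subrr.
Qed.

Lemma range_residual_isoD u (w : 'rV[R]_q) :
  range_residual L (u *m L + w) = range_residual L w.
Proof.
by rewrite /range_residual !mulmxDl mulmx_isoK opprD addrACA subrr add0r.
Qed.

Lemma dot_range_residual_le (w : 'rV[R]_q) :
  dot (range_residual L w) (range_residual L w) <= dot w w.
Proof.
have yLw : dot (w *m L^T *m L) w = dot (w *m L^T) (w *m L^T) by rewrite dot_mulmxl.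
rewrite /range_residual !dotBl !dotBr dotvv_iso (dotC w) yLw.
by have := dotvv_ge0 (w *m L^T); lra.
Qed.

Lemma lin_isometry_entry_le1 i j : `|L i j| <= 1.
Proof.
have rowi1 : dot (row i L) (row i L) = 1.
  rewrite rowE dotvv_iso dotE (bigD1 i) //= big1 => [|k ki].
    by rewrite !mxE !eqxx mulr1 addr0.
  by rewrite !mxE (negbTE ki) mulr0.
have := sqr_coord_le_dot (row i L) j; rewrite rowi1 mxE -real_normK ?num_real //.
by rewrite -[X in _ <= X](expr1n _ 2) ler_pXn2r // ?nnegrE.
Qed.

End LinearIsometry.

Section MatrixContinuity.
Variables (R : realType) (T : topologicalType).

Lemma continuous_mx_entries p q (f : T -> 'M[R]_(p, q)) :
  (forall i j, continuous (fun t => f t i j)) -> continuous f.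
Proof.
move=> cf t; apply/cvg_ballP => e e0.
have : \forall s \near t, forall ij : 'I_p * 'I_q,
    ball (f t ij.1 ij.2) e (f s ij.1 ij.2).
  by apply: filter_forall => -[i j]; exact: (cvg_ball (cf i j t) e0).
by apply: filterS => s fs; split => // i j; exact: (fs (i, j)).
Qed.

Lemma continuous_mx_entry p q (f : T -> 'M[R]_(p, q)) i j :
  continuous f -> continuous (fun t => f t i j).
Proof.
by move=> cf t; exact: continuous_comp (cf t) (@coord_continuous _ _ _ i j (f t)).
Qed.

Lemma continuous_mulmx p q r (f : T -> 'M[R]_(p, q)) (g : T -> 'M[R]_(q, r)) :
  continuous f -> continuous g -> continuous (fun t => f t *m g t).
Proof.
move=> cf cg; apply: continuous_mx_entries => i j; under eq_fun do rewrite mxE.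
apply: continuous_big => [|k _]; first exact: add_continuous.
by move=> t; apply: cvgM; apply: continuous_mx_entry.
Qed.

Lemma continuous_trmx p q (f : T -> 'M[R]_(p, q)) :
  continuous f -> continuous (fun t => (f t)^T).
Proof.
move=> cf; apply: continuous_mx_entries => i j; under eq_fun do rewrite mxE.
exact: continuous_mx_entry.
Qed.

Lemma continuous_dot n (f g : T -> 'rV[R]_n) :
  continuous f -> continuous g -> continuous (fun t => dot (f t) (g t)).
Proof.
move=> cf cg; apply: continuous_mx_entry.
exact: continuous_mulmx cf (continuous_trmx cg).
Qed.

End MatrixContinuity.

Lemma compact_lin_isometries (R : realType) m n (K : set 'M[R]_(m, n)) :
  closed K -> (forall L, K L -> lin_isometry L) -> compact K.
Proof.
move=> cK isoK.
pose box := [set w : 'rV[R]_(m * n) | forall k, `[-1, 1]%classic (w ord0 k)]%classic.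
have cbox : compact box.
  exact: (@rV_compact R (m * n) (fun=> `[-1, 1]%classic)
    (fun=> @segment_compact R (-1) 1)).
have cvec : continuous (@vec_mx R m n).
  apply: continuous_mx_entries => i j; under eq_fun do rewrite mxE.
  exact: coord_continuous.
apply: (subclosed_compact cK (continuous_compact (continuous_subspaceT cvec) cbox)).
move=> L KL; exists (mxvec L); last exact: mxvecK.
move=> k; case/mxvec_indexP: k => i j; rewrite mxvecE /= in_itv /= -ler_norml.
exact: lin_isometry_entry_le1 (isoK _ KL) i j.
Qed.

Lemma compact_continuous_le0 (R : realType) (T : topologicalType) (K : set T)
    (g : T -> R) :
  compact K -> continuous g -> (forall eta, 0 < eta -> exists2 c, K c & g c < eta) ->
  exists2 c, K c & g c <= 0.
Proof.
move=> cK cg approx.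
have [c0 Kc0 _] := approx 1 ltr01.
have [c /set_mem Kc cmin] :=
  compact_EVT_min (ex_intro _ c0 Kc0) cK (continuous_subspaceT cg).
exists c => //; rewrite leNgt; apply/negP => gc0.
have [c' Kc' gc'] := approx _ gc0.
by have := cmin c' (mem_set Kc'); rewrite leNgt gc'.
Qed.

Section FrechetSubdifferential.
Variables (R : realType) (n : nat).

Lemma frechet_subdiff_local_min (f : 'rV[R]_n -> \bar R) (Psi : 'rV[R]_n -> R)
    (X g : 'rV[R]_n) :
  (forall Y, f Y != -oo%E) -> f X \is a fin_num ->
  local_minimizer (fun Y => (f Y + (Psi Y)%:E)%E) X ->
  is_frechet_gradient Psi X g -> frechet_subdiff f X (- g).
Proof.
move=> fNoo fXfin [e1 e10 minX] gradX; split => // eps eps0.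
have [d1 d10 closeX] := gradX eps eps0.
exists (Num.min e1 d1) => [|z /andP[z0]]; first by rewrite lt_min e10.
rewrite lt_min => /andP[ze1 zd1].
have := closeX z (introT andP (conj z0 zd1)); rewrite ler_norml => /andP[_ PsiX].
have := minX z ze1; rewrite -(fineK fXfin).
case: (f z) (fNoo z) => [s| |] //= _; last by rewrite !addye ?leey.
by rewrite -!EFinD !lee_fin dotNr; lra.
Qed.

Lemma frechet_subdiff_level_dot_le (f : 'rV[R]_n -> \bar R) (x y : 'rV[R]_n) :
  frechet_subdiff f x y -> forall eps, 0 < eps -> exists2 d, 0 < d &
    forall z, enorm (z - x) < d -> f z = f x -> dot (z - x) y <= eps * enorm (z - x).
Proof.
move=> [fxfin subxy] eps eps0; have [d d0 near_x] := subxy eps eps0.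
exists d => // z zd fz.
have [zx0|zx] := eqVneq (enorm (z - x)) 0.
  by rewrite zx0 (enorm_eq0 zx0) dot0l mulr0.
have z0 : 0 < enorm (z - x) by rewrite lt0r zx enorm_ge0.
have := near_x z (introT andP (conj z0 zd)).
by rewrite fz -(fineK fxfin) -!EFinB lee_fin; lra.
Qed.

End FrechetSubdifferential.

Definition adapt_gap (R : realType) m n (x : 'rV[R]_m) (X v : 'rV[R]_n)
    (L : 'M[R]_(m, n)) :=
  dot (x *m L - X) (x *m L - X) + dot (range_residual L v) (range_residual L v).

Lemma continuous_adapt_gap (R : realType) m n (x : 'rV[R]_m) (X v : 'rV[R]_n) :
  continuous (adapt_gap x X v).
Proof.
have cid : continuous (fun L : 'M[R]_(m, n) => L) by move=> L; exact: cvg_id.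
have cfit : continuous (fun L : 'M[R]_(m, n) => x *m L - X).
  have cxL : continuous (fun L : 'M[R]_(m, n) => x *m L).
    exact: continuous_mulmx (@cst_continuous _ _ x) cid.
  by move=> L; exact: continuousB (cxL L) (@cst_continuous _ _ X L).
have cres : continuous (fun L : 'M[R]_(m, n) => range_residual L v).
  have cvLL : continuous (fun L : 'M[R]_(m, n) => v *m L^T *m L).
    have cvL := continuous_mulmx (@cst_continuous _ _ v) (continuous_trmx cid).
    exact: (continuous_mulmx cvL cid).
  by move=> L; exact: continuousB (cvLL L) (@cst_continuous _ _ v L).
have cfit2 : continuous (fun L : 'M[R]_(m, n) => dot (x *m L - X) (x *m L - X)).
  exact: (continuous_dot cfit cfit).
have cres2 : continuous (fun L : 'M[R]_(m, n) =>
    dot (range_residual L v) (range_residual L v)).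
  exact: (continuous_dot cres cres).
by move=> L; exact: continuousD (cfit2 L) (cres2 L).
Qed.

Section SpectralDecompositionSystem.
Variables (R : realType) (m n : nat).
Variables (G : Type) (mul : G -> G -> G) (one : G) (inv : G -> G).
Variables (act : G -> 'rV[R]_m -> 'rV[R]_m) (gamma : 'rV[R]_n -> 'rV[R]_m).
Variables (A : Type) (Lam : A -> 'M[R]_(m, n)).
Hypothesis sys : spectral_decomposition_system mul one inv act gamma Lam.
Variable phi : 'rV[R]_m -> \bar R.
Hypothesis phi_inv : S_invariant act phi.

Lemma Lam_isometry a : lin_isometry (Lam a).
Proof. by case: sys. Qed.

Lemma exists_adapted X : exists a, adapted_set gamma Lam X a.
Proof. by case: sys => _ _ _ + _; apply. Qed.

Lemma dotvv_gamma Y : dot (gamma Y) (gamma Y) = dot Y Y.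
Proof.
by have [a aY] := exists_adapted Y; rewrite [in RHS]aY (dotvv_iso (Lam_isometry a)).
Qed.

Lemma dot_le_dot_gamma Y Z : dot Y Z <= dot (gamma Y) (gamma Z).
Proof. by case: sys. Qed.

Lemma dotvv_gammaB_le Y Z :
  dot (gamma Y - gamma Z) (gamma Y - gamma Z) <= dot (Y - Z) (Y - Z).
Proof.
have := dot_le_dot_gamma Y Z; rewrite !dotBl !dotBr !dotvv_gamma.
by rewrite (dotC (gamma Z)) (dotC Z); lra.
Qed.

Lemma phi_gamma_Lam a z : phi (gamma (z *m Lam a)) = phi z.
Proof.
case: sys => _ _ [tau [_ tau_orbit gamma_Lam]] _ _.
by rewrite gamma_Lam; have [s ->] := tau_orbit z; exact: phi_inv.
Qed.

Lemma adapted_misfit_le Y Z a : adapted_set gamma Lam Z a ->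
  dot (gamma Y *m Lam a - Y) (gamma Y *m Lam a - Y) <= 4 * dot (Z - Y) (Z - Y).
Proof.
rewrite /adapted_set /= => adZ.
have -> : gamma Y *m Lam a - Y = (gamma Y - gamma Z) *m Lam a + (Z - Y).
  by rewrite mulmxBl -adZ addrA subrK.
apply: le_trans (dotvvDl_le _ _) _; rewrite (dotvv_iso (Lam_isometry a)).
by have := dotvv_gammaB_le Y Z; rewrite -[Y - Z]opprB dotvvN; lra.
Qed.

Lemma adapted_misfit_le_dot Y Z a : adapted_set gamma Lam Z a ->
  dot (gamma Y *m Lam a - Y) (gamma Y *m Lam a - Y) <=
  2 * dot (gamma Y *m Lam a - Y) (Z - Y).
Proof.
rewrite /adapted_set /= => adZ.
have WW : dot (gamma Y *m Lam a) (gamma Y *m Lam a) = dot Y Y.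
  by rewrite (dotvv_iso (Lam_isometry a)) dotvv_gamma.
have := dot_le_dot_gamma Y Z.
rewrite -(dot_iso (Lam_isometry a) (gamma Y) (gamma Z)) -adZ => WZ.
by rewrite !dotBl !dotBr WW (dotC Y (gamma Y *m Lam a)); lra.
Qed.

Lemma range_residual_adapted Y Z a : adapted_set gamma Lam Z a ->
  range_residual (Lam a) (Z - Y) = range_residual (Lam a) (gamma Y *m Lam a - Y).
Proof.
rewrite /adapted_set /= => adZ.
have -> : Z - Y = (gamma Z - gamma Y) *m Lam a + (gamma Y *m Lam a - Y).
  by rewrite mulmxBl -adZ addrA subrK.
exact: range_residual_isoD (Lam_isometry a) _ _.
Qed.

Lemma frechet_subdiff_gamma_adapted X v a : adapted_set gamma Lam X a ->
  frechet_subdiff (fun Y => phi (gamma Y)) X v ->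
  frechet_subdiff phi (gamma X) (v *m (Lam a)^T).
Proof.
rewrite /adapted_set /= => adX [fin subv]; split => // eps eps0.
have [d d0 near_X] := subv eps eps0; exists d => // z zd.
have zX : z *m Lam a - X = (z - gamma X) *m Lam a by rewrite mulmxBl -adX.
have := near_X (z *m Lam a).
by rewrite zX (Lam_isometry a) phi_gamma_Lam dot_mulmxl; exact.
Qed.

Lemma adapt_gap_shift_le X v t eps a : 0 < t -> 0 < eps ->
  adapted_set gamma Lam (X + t *: v) a ->
  dot (gamma X *m Lam a - X) v <= eps * enorm (gamma X *m Lam a - X) ->
  adapt_gap (gamma X) X v (Lam a) <= 4 * (t ^+ 2 + 1) * eps ^+ 2.
Proof.
move=> t0 eps0 adZ Dv.
have ZX : X + t *: v - X = t *: v by rewrite addrC addKr.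
set D := gamma X *m Lam a - X in Dv *.
have nD0 := enorm_ge0 D.
have Dle : enorm D <= 2 * t * eps.
  have sqD : enorm D * enorm D <= 2 * t * eps * enorm D.
    have := adapted_misfit_le_dot X adZ.
    by rewrite -/D ZX dotZr -sqr_enorm expr2; nra.
  have [->|D0] := eqVneq (enorm D) 0; first by rewrite !mulr_ge0 // ltW.
  by rewrite -(ler_pM2r (_ : 0 < enorm D)) // lt0r D0.
have res_le : t ^+ 2 * dot (range_residual (Lam a) v) (range_residual (Lam a) v)
    <= t ^+ 2 * (4 * eps ^+ 2).
  rewrite -dotvvZ -range_residualZ -ZX (range_residual_adapted X adZ) -/D.
  apply: le_trans (dot_range_residual_le (Lam_isometry a) D) _.
  by rewrite -sqr_enorm; nra.
rewrite ler_pM2l ?exprn_gt0 // in res_le.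
by rewrite /adapt_gap -/D -sqr_enorm; nra.
Qed.

Lemma adapt_gap_approx X v : frechet_subdiff (fun Y => phi (gamma Y)) X v ->
  forall eta, 0 < eta -> exists2 L, range Lam L & adapt_gap (gamma X) X v L < eta.
Proof.
move=> subv eta eta0.
pose eps := Num.min 1 (eta / 16).
have eps0 : 0 < eps by rewrite lt_min ltr01 divr_gt0.
have [eps1 eps_eta] : eps <= 1 /\ eps <= eta / 16 by rewrite !ge_min !lexx orbT.
have [d d0 level] := frechet_subdiff_level_dot_le subv eps0.
have nv0 := enorm_ge0 v.
pose t := Num.min 1 (d / (2 * (enorm v + 1))).
have t0 : 0 < t by rewrite lt_min ltr01 divr_gt0 // mulr_gt0 // ltr_wpDl.
have [t1 td] : t <= 1 /\ t * (2 * (enorm v + 1)) <= d.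
  by rewrite -ler_pdivlMr ?mulr_gt0 ?ltr_wpDl // !ge_min !lexx orbT.
have [a adZ] := exists_adapted (X + t *: v).
exists (Lam a); first by exists a.
have Dd : enorm (gamma X *m Lam a - X) < d.
  suff : enorm (gamma X *m Lam a - X) <= 2 * t * enorm v by nra.
  apply: enorm_le; first by rewrite !mulr_ge0 // ltW.
  have ZX : X + t *: v - X = t *: v by rewrite addrC addKr.
  have := adapted_misfit_le X adZ; rewrite ZX dotvvZ -(sqr_enorm v).
  by rewrite !exprMn; lra.
have gap := adapt_gap_shift_le t0 eps0 adZ (level _ Dd (phi_gamma_Lam a (gamma X))).
have t2 : 4 * (t ^+ 2 + 1) * eps ^+ 2 <= 8 * eps ^+ 2.
  by rewrite ler_wpM2r ?sqr_ge0 //; nra.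
have : eps ^+ 2 <= eps * (eta / 16) by rewrite expr2 ler_pM2l.
have : eps * eta <= eta by rewrite ler_piMl // ltW.
by lra.
Qed.

Lemma exists_adapted_range_residual0 X v : closed (range Lam) ->
  frechet_subdiff (fun Y => phi (gamma Y)) X v ->
  exists a, adapted_set gamma Lam X a /\ range_residual (Lam a) v = 0.
Proof.
move=> closedLam subv.
have cLam : compact (range Lam).
  by apply: compact_lin_isometries => // _ [a _ <-]; exact: Lam_isometry.
have [_ [a _ <-]] := compact_continuous_le0 cLam
  (@continuous_adapt_gap R m n (gamma X) X v) (adapt_gap_approx subv).
rewrite /adapt_gap => gap0.
have := dotvv_ge0 (gamma X *m Lam a - X); have := dotvv_ge0 (range_residual (Lam a) v).
move=> res_ge0 fit_ge0; exists a; split; last by apply: dotvv_eq0; lra.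
by apply/esym/eqP; rewrite -subr_eq0; apply/eqP/dotvv_eq0; lra.
Qed.

End SpectralDecompositionSystem.

Theorem corollary4p4 (R : realType) (m n : nat)
  (G : Type) (mul : G -> G -> G) (one : G) (inv : G -> G)
  (act : G -> 'rV[R]_m -> 'rV[R]_m) (gamma : 'rV[R]_n -> 'rV[R]_m)
  (A : Type) (Lam : A -> 'M[R]_(m, n))
  (hsys : spectral_decomposition_system mul one inv act gamma Lam)
  (hclosed : closed (range Lam : set 'M[R]_(m, n)))
  (phi : 'rV[R]_m -> \bar R)
  (hprop : proper_fun phi) (hinv : S_invariant act phi)
  (Psi : 'rV[R]_n -> R) (gradPsi : 'rV[R]_n -> 'rV[R]_n)
  (hPsi : forall Z, is_frechet_gradient Psi Z (gradPsi Z))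
  (X : 'rV[R]_n) (hdom : domf phi (gamma X))
  (hmin : local_minimizer (fun Y => (phi (gamma Y) + (Psi Y)%:E)%E) X) :
  exists y, frechet_subdiff phi (gamma X) y /\
    exists a, adapted_set gamma Lam X a /\ - gradPsi X = y *m Lam a.
Proof.
have finX : phi (gamma X) \is a fin_num by rewrite fin_numE hprop.1 (lt_eqF hdom).
have subv := frechet_subdiff_local_min (fun Y => hprop.1 (gamma Y)) finX hmin (hPsi X).
have [a [adX res0]] := exists_adapted_range_residual0 hsys hinv hclosed subv.
exists (- gradPsi X *m (Lam a)^T); split.
  exact: (frechet_subdiff_gamma_adapted hsys hinv adX subv).
by exists a; split => //; apply/esym/subr0_eq; exact: res0.
Qed.
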